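(* Let $\mathbf S$ be an SRRW in $\mathbb{R}^d$ with parameter $\alpha\in[0,1)$ and step distribution $\mu\ne\delta_{\mathbf 0}$. For $R>0$ let $\zeta_R:=\inf\{n\in\mathbb N:\|\mathbf S_n\|\ge R\}$. Then $\mathbb E\zeta_R<\infty$ for every $R>0$.
   Context: SRRW: $\mu$ a probability measure on $\mathbb{R}^d$, $\alpha\in[0,1]$; $(\xi_n)_{n\ge2}$ i.i.d. Bernoulli($\alpha$), $(U[n])_{n\ge1}$ independent with $U[n]$ uniform on $\{1,\dots,n\}$. Sample $\mathbf X_1\sim\mu$; for $n\ge1$, if $\xi_{n+1}=1$ set $\mathbf X_{n+1}=\mathbf X_{U[n]}$, else sample $\mathbf X_{n+1}\sim\mu$ independently. $\mathbf S_0=\mathbf 0$, $\mathbf S_n=\sum_{i\le n}\mathbf X_i$. *)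

From HB Require Import structures.
From mathcomp Require Import all_boot all_order all_algebra.
From mathcomp Require Import all_classical all_reals all_analysis.
Set Implicit Arguments. Unset Strict Implicit. Unset Printing Implicit Defensive.
Import Order.TTheory GRing.Theory Num.Theory.
Local Open Scope classical_set_scope.
Local Open Scope ring_scope.

(* R^d is modelled as d.-tuple R, with mathcomp-analysis' product sigma-algebra. *)

Definition mutually_independent (R : realType) (dO : measure_display)
  (O : measurableType dO) (P : probability O R) (I : eqType)
  (G : I -> set (set O)) : Prop :=
  forall (s : seq I), uniq s ->
  forall A : I -> set O, (forall i, i \in s -> G i (A i)) ->
  P (\big[setI/setT]_(i <- s) A i) = (\prod_(i <- s) P (A i))%E.

Definition preimages (dO dT : measure_display) (O : measurableType dO)
  (T : measurableType dT) (f : O -> T) : set (set O) :=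
  [set f @^-1` B | B in [set B : set T | measurable B]].

(** The SRRW steps, built from the innovations Y (Y n ~ mu),
    the coins xi (xi n ~ Bernoulli alpha) and the indices U (U n uniform on 1..n):
    X_1 = Y_1, X_{n+1} = X_{U[n]} if xi_{n+1} = 1, else Y_{n+1}.
    srrw_steps n w = [:: X_1 w; ...; X_n w]. *)
Fixpoint srrw_steps (R : realType) (d : nat) (O : Type)
  (xi : nat -> O -> bool) (U : nat -> O -> nat) (Y : nat -> O -> d.-tuple R)
  (n : nat) (w : O) : seq (d.-tuple R) :=
  match n with
  | 0 => [::]
  | m.+1 =>
      let prev := srrw_steps xi U Y m w in
      let x := if m == 0%N then Y 1%N w
               else if xi m.+1 w then nth (Y m.+1 w) prev (U m w).-1
               else Y m.+1 w in
      rcons prev x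
  end.

Definition srrw_X (R : realType) (d : nat) (O : Type)
  (xi : nat -> O -> bool) (U : nat -> O -> nat) (Y : nat -> O -> d.-tuple R)
  (n : nat) (w : O) : d.-tuple R :=
  nth (Y n w) (srrw_steps xi U Y n w) n.-1.

Definition srrw_S (R : realType) (d : nat) (O : Type)
  (xi : nat -> O -> bool) (U : nat -> O -> nat) (Y : nat -> O -> d.-tuple R)
  (n : nat) (w : O) (i : 'I_d) : R :=
  \sum_(k < n) tnth (srrw_X xi U Y k.+1 w) i.

Definition eucl_norm (R : realType) (d : nat) (v : 'I_d -> R) : R :=
  Num.sqrt (\sum_(i < d) v i ^+ 2).

(** zeta_r = inf {n in N : ||S_n|| >= r}  (= +oo if the set is empty) *)
Definition srrw_exit_time (R : realType) (d : nat) (O : Type)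
  (xi : nat -> O -> bool) (U : nat -> O -> nat) (Y : nat -> O -> d.-tuple R)
  (r : R) (w : O) : \bar R :=
  ereal_inf [set (n%:R)%:E | n in
     [set n : nat | r <= eucl_norm (srrw_S xi U Y n w)]].

From HB Require Import structures.
From mathcomp Require Import all_boot all_order all_algebra.
From mathcomp Require Import all_classical all_reals all_analysis.
From mathcomp Require Import measurable_realfun ring lra zify.
Import Order.TTheory GRing.Theory Num.Theory numFieldNormedType.Exports.
Local Open Scope classical_set_scope.
Local Open Scope ring_scope.

(* Since mu is not the Dirac mass at the origin, some half-space
   B = {y | e < s y_i} with |s| = 1 and e > 0 has mass q > 0.  Take m with
   m e > 2 r and cut time into the blocks of steps 2 + k m, ..., 1 + (k + 1) m.
   With probability p = ((1 - alpha) q)^m every step of block k is a fresh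
   innovation lying in B; then s S_i grows by more than 2 r across the block,
   so ||S|| >= r at one of its two ends and zeta_r <= (k + 1)(m + 1).  These
   block events are independent, hence the first successful block is
   geometric and E zeta_r <= (m + 1) / p. *)

Lemma uniq_flatten_map {I K : eqType} (J : K -> seq I) (blk : I -> K) (T : seq K) :
  (forall k, uniq (J k)) -> (forall k i, i \in J k -> blk i = k) -> uniq T ->
  uniq (flatten (map J T)).
Proof.
move=> uJ blkJ; elim: T => [|k T IH] //= /andP[kT uT].
rewrite cat_uniq uJ IH // andbT; apply/hasPn => i /flatten_mapP[k' k'T iJk'].
by apply/negP => iJk; move: kT; rewrite -(blkJ _ _ iJk) (blkJ _ _ iJk') k'T.
Qed.

Lemma mutually_independent_blocks {R : realType} {dO : measure_display}
  {O : measurableType dO} (P : probability O R) {I K : eqType}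
  (G : I -> set (set O)) (A : I -> set O) (J : K -> seq I) (T : seq K) :
  mutually_independent P G -> (forall i, G i (A i)) ->
  uniq (flatten (map J T)) ->
  P (\big[setI/setT]_(k <- T) \big[setI/setT]_(i <- J k) A i) =
  (\prod_(k <- T) \prod_(i <- J k) P (A i))%E.
Proof.
move=> indep GA uJT.
rewrite -(big_map J xpredT (fun s => \big[setI/setT]_(i <- s) A i)) -big_flatten.
rewrite -(big_map J xpredT (fun s => \prod_(i <- s) P (A i))%E) -big_flatten.
exact: indep.
Qed.

Lemma ge0_le_integralT {R : realType} {dT : measure_display}
  {T : measurableType dT} (mu : measure T R) {f g : T -> \bar R} :
  (forall x, 0 <= f x)%E -> (forall x, f x <= g x)%E ->
  (\int[mu]_x f x <= \int[mu]_x g x)%E.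
Proof.
move=> f0 fg; have g0 x : (0 <= g x)%E by apply: le_trans (fg x).
rewrite !ge0_integralTE //; apply: ereal_sup_le => _ [h hf <-]; exists h => //.
by move=> x; apply: le_trans (fg x).
Qed.

Section FirstSuccess.
Context {R : realType} {dO : measure_display} {O : measurableType dO}.
Variables (P : probability O R) (E : nat -> set O) (p : R).
Hypothesis mE : forall k, measurable (E k).
Hypothesis PE : forall T, uniq T ->
  P (\big[setI/setT]_(k <- T) E k) = (p ^+ size T)%:E.

Definition no_success_before (K : nat) : set O :=
  [set w | forall k, (k < K)%N -> ~ E k w].

Lemma no_success_before0 : no_success_before 0 = setT.
Proof. by apply/seteqP; split => w // _ k. Qed.

Lemma no_success_beforeS K :
  no_success_before K.+1 = no_success_before K `\` E K.
Proof.
apply/seteqP; split => w /=.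
  by move=> FK1; split => [k kK|]; apply: FK1 => //; rewrite ltnW.
by move=> [FK EK] k; rewrite ltnS leq_eqVlt => /orP[/eqP->|/FK].
Qed.

Lemma measurable_no_success_before K : measurable (no_success_before K).
Proof.
elim: K => [|K IH]; first by rewrite no_success_before0.
by rewrite no_success_beforeS; apply: measurableD.
Qed.

Lemma probability_no_success_before K :
  P (no_success_before K) = ((1 - p) ^+ K)%:E.
Proof.
(* Generalized to the joint law with later successes E k, k in T, so that the
   induction step can split off E K with [measureD]. *)
suff PFG T : uniq T -> (forall k, k \in T -> K <= k)%N ->
    P (no_success_before K `&` \big[setI/setT]_(k <- T) E k) =
    ((1 - p) ^+ K * p ^+ size T)%:E.
  by move: (PFG [::] isT); rewrite big_nil setIT mulr1; apply=> k; rewrite in_nil.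
elim: K T => [|K IH] T uT TK.
  by rewrite no_success_before0 setTI PE // mul1r.
have KT : K \notin T by apply/negP => /TK; rewrite ltnn.
have TK' k : k \in T -> (K <= k)%N by move=> /TK /ltnW.
have KTK k : k \in K :: T -> (K <= k)%N.
  by rewrite inE => /orP[/eqP->//|/TK'].
have mFG : measurable (no_success_before K `&` \big[setI/setT]_(k <- T) E k).
  by apply: measurableI; [exact: measurable_no_success_before|exact: bigsetI_measurable].
rewrite no_success_beforeS setIDAC setIDA measureD //; last first.
  by rewrite -ge0_fin_numE ?fin_num_measure.
rewrite -setIA [_ `&` E K]setIC.
have := IH (K :: T); rewrite big_cons /= KT uT => /(_ isT KTK) ->.
by rewrite IH // -EFinB exprS exprSr; congr EFin; ring.
Qed.

Lemma first_success_bound (Z : O -> \bar R) (c : nat) w : (0 < c)%N ->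
  (forall k, E k w -> (Z w <= (k.+1 * c)%:R%:E)%E) ->
  (Z w <= \sum_(0 <= K <oo) (c%:R * \1_(no_success_before K) w : R)%:E)%E.
Proof.
move=> c0 ZE.
have partial N : (forall K, (K < N)%N -> no_success_before K w) ->
    (((N * c)%:R : R)%:E <=
     \sum_(0 <= K <oo) (c%:R * \1_(no_success_before K) w : R)%:E)%E.
  move=> FN; apply: le_trans (nneseries_lim_ge N _); last first.
    by move=> K _ _; rewrite lee_fin mulr_ge0.
  rewrite sumEFin lee_fin big_nat_cond (eq_bigr (fun=> c%:R)) => [|K].
    by rewrite -big_nat_cond sumr_const_nat subn0 natrM mulr_natl.
  by rewrite andbT => /andP[_ /FN FK]; rewrite indicE mem_set ?mulr1.
have [[k Ek]|none] := pselect (exists k, E k w).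
  (* Bound Z at the first success j: no earlier block succeeds. *)
  have [j /asboolP Ej jmin] := ex_minnP (ex_intro (fun k => `[< E k w >]) k (asboolT Ek)).
  apply: le_trans (ZE j Ej) (partial j.+1 _) => K; rewrite ltnS => Kj k' k'K Ek'.
  by have := jmin k' (asboolT Ek'); lia.
have FK K : no_success_before K w by move=> k _ Ek; apply: none; exists k.
suff -> : (\sum_(0 <= K <oo) (c%:R * \1_(no_success_before K) w : R)%:E = +oo)%E.
  exact: leey.
apply/eqyP => A A0; apply: le_trans (partial (Num.truncn A).+1 (fun K _ => FK K)).
rewrite lee_fin (le_trans (ltW (truncnS_gt A))) // ler_nat leq_pmulr //.
Qed.

Lemma first_success_integral_lt_pinfty (Z : O -> \bar R) (c : nat) :
  0 < p -> (0 < c)%N -> (forall w, 0 <= Z w)%E ->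
  (forall k w, E k w -> (Z w <= (k.+1 * c)%:R%:E)%E) ->
  (\int[P]_w Z w < +oo)%E.
Proof.
move=> p0 c0 Z0 ZE.
have p1 : p <= 1.
  by rewrite -lee_fin -[p]expr1 -(PE [:: 0%N]) // big_seq1 probability_le1.
have Fge0 K w : (0 <= (c%:R * \1_(no_success_before K) w : R)%:E)%E.
  by rewrite lee_fin mulr_ge0.
have ZF w := first_success_bound Z c w c0 (ZE^~ w).
apply: le_lt_trans (ge0_le_integralT P Z0 ZF) _.
rewrite integral_nneseries //; last first.
  move=> K; apply/measurable_EFinP; apply: measurable_funM => //.
  exact/measurable_indic/measurable_no_success_before.
rewrite (eq_eseriesr (g := fun K => (c%:R * (1 - p) ^+ K)%:E)) => [|K _]; last first.
  have mF := measurable_no_success_before K.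
  rewrite (integralZl_indic _ (fun=> no_success_before K)) //=; last first.
    by rewrite ltNge ler0n.
  rewrite integral_indic // setIT -[X in (_ * X)%E]/(P _).
  by rewrite probability_no_success_before EFinM.
have geo : cvgn (series (geometric (c%:R : R) (1 - p))).
  by apply: cvgP; apply: cvg_geometric_series; rewrite ger0_norm ?subr_ge0 ?ltrBlDl ?ltrDr.
rewrite (_ : (fun n => _) = EFin \o series (geometric (c%:R : R) (1 - p))).
  by rewrite EFin_lim // ltry.
by apply/funext => n; rewrite /series /= sumEFin.
Qed.

End FirstSuccess.

Lemma norm_ge_of_gap {R : realDomainType} {s x y r : R} :
  `|s| = 1 -> 2 * r < s * (y - x) -> r <= `|x| \/ r <= `|y|.
Proof.
move=> s1 gap; have : 2 * r < `|x| + `|y|.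
  apply: lt_le_trans gap _; apply: le_trans (ler_norm _) _.
  by rewrite normrM s1 mul1r (le_trans (ler_normB _ _)) // addrC.
by case: (lerP r `|x|) => rx; [left | right; lra].
Qed.

Lemma coord_le_eucl_norm {R : realType} {d : nat} (v : 'I_d -> R) (i : 'I_d) :
  `|v i| <= eucl_norm v.
Proof.
rewrite /eucl_norm -sqrtr_sqr ler_sqrt; last by apply: sumr_ge0 => j _; exact: sqr_ge0.
by rewrite (bigD1 i) //= lerDl; apply: sumr_ge0 => j _; exact: sqr_ge0.
Qed.

Lemma measurable_coord_halfspace {R : realType} {d : nat} (i : 'I_d) (e s : R) :
  measurable [set y : d.-tuple R | e < s * tnth y i].
Proof.
have -> : [set y : d.-tuple R | e < s * tnth y i] =
    (fun y => s * tnth y i) @^-1` `]e, +oo[.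
  by apply/seteqP; split => y /=; rewrite in_itv /= andbT.
rewrite -[X in measurable X]setTI; apply: measurable_funM => //.
exact: measurable_tnth.
Qed.

Lemma probability_dirac_of_negligible {R : realType} {dT : measure_display}
  {T : measurableType dT} (mu : probability T R) (a : T) (A : set T) :
  mu.-negligible (~` [set a]) -> measurable A -> mu A = \d_a A.
Proof.
move=> na mA; rewrite diracE; have [Aa|nAa] := boolP (a \in A).
  have nAC : mu (~` A) = 0%E.
    apply: measure_negligible; first exact: measurableC.
    by apply: negligibleS na => y nAy ya; apply: nAy; rewrite ya; exact/set_mem.
  rewrite -[A]setCK probability_setC; last exact: measurableC.
  by rewrite -[X in (1 - X)%E]/(mu _) nAC sube0.
apply: measure_negligible => //; apply: negligibleS na => y Ay ya.
by move/negP: nAa; apply; rewrite -ya; exact/mem_set.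
Qed.

Lemma negligible_tuple_neq0 {R : realType} {d : nat}
  (mu : probability (d.-tuple R) R) :
  (forall i s e, 0 < e -> `|s| = 1 -> mu [set y | e < s * tnth y i] = 0%E) ->
  mu.-negligible (~` [set nseq_tuple d (0 : R)]).
Proof.
move=> null.
have coord i : mu.-negligible [set y : d.-tuple R | tnth y i != 0].
  have neg : mu.-negligible (\bigcup_n
      ([set y : d.-tuple R | n.+1%:R^-1 < 1 * tnth y i] `|`
       [set y | n.+1%:R^-1 < -1 * tnth y i])).
    apply: negligible_bigcup => n.
    have half s : `|s| = 1 ->
        mu.-negligible [set y : d.-tuple R | n.+1%:R^-1 < s * tnth y i].
      move=> s1; apply/negligibleP; first exact: measurable_coord_halfspace.
      by apply: null; rewrite ?invr_gt0 ?ltr0Sn.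
    by apply: negligibleU; apply: half; rewrite ?normrN normr1.
  apply: negligibleS neg => y /= yi0.
  have gt : (Num.truncn `|tnth y i|^-1).+1%:R^-1 < `|tnth y i|.
    by rewrite invf_plt ?posrE ?ltr0Sn ?normr_gt0 // truncnS_gt.
  set n := Num.truncn _ in gt; exists n => //.
  have [yi_gt0|yi_le0] := ltP 0 (tnth y i).
    by left; rewrite /= mul1r; rewrite gtr0_norm in gt.
  by right; rewrite /= mulN1r; rewrite ler0_norm in gt.
have neg : mu.-negligible
    (\big[setU/set0]_(i <- enum 'I_d) [set y : d.-tuple R | tnth y i != 0]).
  apply: (big_ind (fun A => mu.-negligible A)) => //; first exact: negligible_set0.
  exact: negligibleU.
apply: negligibleS neg => y /= y0; rewrite -bigcup_seq.
have [i yi] : exists i, tnth y i != 0.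
  apply: contrapT => all0; apply: y0; apply: eq_from_tnth => i.
  by rewrite tnth_nseq; apply: contrapT => yi; apply: all0; exists i; exact/eqP.
by exists i => //; rewrite /= mem_enum.
Qed.

Lemma exists_coord_halfspace_gt0 {R : realType} {d : nat}
  (mu : probability (d.-tuple R) R) :
  (exists A, measurable A /\ mu A <> \d_(nseq_tuple d (0 : R)) A) ->
  exists i s e, 0 < e /\ `|s| = 1 /\ (0 < mu [set y | (e < s * tnth y i)%R])%E.
Proof.
move=> [A [mA muA]]; apply: contrapT => none; apply: muA.
apply: probability_dirac_of_negligible mA; apply: negligible_tuple_neq0 => i s e e0 s1.
apply/eqP; rewrite eq_le measure_ge0 andbT leNgt; apply/negP => gt0.
by apply: none; exists i, s, e.
Qed.

Section SRRWPaths.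
Context {R : realType} {d : nat} {O : Type}.
Variables (xi : nat -> O -> bool) (U : nat -> O -> nat) (Y : nat -> O -> d.-tuple R).

Lemma size_srrw_steps n w : size (srrw_steps xi U Y n w) = n.
Proof. by elim: n => [|n IH] //=; rewrite size_rcons IH. Qed.

Lemma srrw_X_fresh j w : (2 <= j)%N -> xi j w = false -> srrw_X xi U Y j w = Y j w.
Proof.
case: j => [|[|j]] // _ xij.
by rewrite /srrw_X /= nth_rcons size_rcons size_srrw_steps ltnn eqxx xij.
Qed.

Lemma srrw_S_addn a m w i :
  srrw_S xi U Y (a + m) w i - srrw_S xi U Y a w i =
  \sum_(t < m) tnth (srrw_X xi U Y (a + t).+1 w) i.
Proof.
rewrite /srrw_S -!(big_mkord xpredT (fun k => tnth (srrw_X xi U Y k.+1 w) i)).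
rewrite (big_cat_nat (n := a)) ?leq_addr //= addrAC subrr add0r.
by rewrite -{1}(add0n a) big_addn addKn big_mkord; apply: eq_bigr => t _; rewrite addnC.
Qed.

Lemma srrw_exit_time_ge0 r w : (0 <= srrw_exit_time xi U Y r w)%E.
Proof. by apply/ereal_infP => _ [n _ <-]; rewrite lee_fin. Qed.

Lemma srrw_exit_time_le {r n w} : r <= eucl_norm (srrw_S xi U Y n w) ->
  (srrw_exit_time xi U Y r w <= n%:R%:E)%E.
Proof. by move=> rS; apply: ereal_inf_lbound; exists n. Qed.

Lemma srrw_exit_time_le_fresh_run {r a m i s e w} : `|s| = 1 -> 2 * r < m%:R * e ->
  (forall t, (t < m)%N -> xi (a + t).+2 w = false /\ e < s * tnth (Y (a + t).+2 w) i) ->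
  (srrw_exit_time xi U Y r w <= (a + m).+1%:R%:E)%E.
Proof.
move=> s1 rme run.
have gap : 2 * r < s * (srrw_S xi U Y (a.+1 + m) w i - srrw_S xi U Y a.+1 w i).
  apply: lt_le_trans rme _; rewrite srrw_S_addn mulr_sumr.
  rewrite -[m in m%:R]card_ord mulr_natl -sumr_const ler_sum // => t _.
  have [xit et] := run t (ltn_ord t).
  by rewrite addSn srrw_X_fresh // ltW.
have [rSa|rSb] := norm_ge_of_gap s1 gap.
  apply: le_trans (srrw_exit_time_le (le_trans rSa (coord_le_eucl_norm _ _))) _.
  by rewrite lee_fin ler_nat ltnS leq_addr.
apply: le_trans (srrw_exit_time_le (le_trans rSb (coord_le_eucl_norm _ _))) _.
by rewrite addSn.
Qed.

End SRRWPaths.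

Section FreshBlocks.
Context {R : realType} {d : nat} {O : Type}.
Variables (xi : nat -> O -> bool) (Y : nat -> O -> d.-tuple R).
Variables (B : set (d.-tuple R)) (m : nat).

(* Indexed like the independent family of the theorem: [inl (inl n)] stands
   for [xi (n + 2)], [inl (inr n)] for [U (n + 1)], [inr n] for [Y (n + 1)]. *)
Definition fresh_event (i : (nat + nat) + nat) : set O :=
  match i with
  | inl (inl n) => xi n.+2 @^-1` [set false]
  | inl (inr _) => setT
  | inr n => Y n.+1 @^-1` B
  end.

Definition block_indices (k : nat) : seq ((nat + nat) + nat) :=
  [seq inl (inl (k * m + t)) | t <- iota 0 m] ++
  [seq inr (k * m + t).+1 | t <- iota 0 m].

Definition fresh_block (k : nat) : set O :=
  \big[setI/setT]_(i <- block_indices k) fresh_event i.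

Lemma fresh_block_run {k w} : fresh_block k w -> forall t, (t < m)%N ->
  xi (k * m + t).+2 w = false /\ B (Y (k * m + t).+2 w).
Proof.
rewrite /fresh_block -bigcap_seq => blk t tm; split.
  by apply: (blk (inl (inl (k * m + t)))); rewrite /= mem_cat map_f ?mem_iota.
by apply: (blk (inr (k * m + t).+1)); rewrite /= mem_cat map_f ?orbT ?mem_iota.
Qed.

Lemma uniq_fresh_blocks T : (0 < m)%N -> uniq T ->
  uniq (flatten (map block_indices T)).
Proof.
move=> m0; pose blk (i : (nat + nat) + nat) := match i with
  | inl (inl n) => (n %/ m)%N | inl (inr _) => 0%N | inr n => (n.-1 %/ m)%N end.
apply: (@uniq_flatten_map _ _ _ blk) => [k|k i].
  rewrite cat_uniq !map_inj_uniq ?iota_uniq ?andbT /=.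
  - by apply/hasPn => _ /mapP[t _ ->]; apply/mapP => -[].
  - by move=> t t' [/addnI].
  - by move=> t t' [/addnI].
rewrite mem_cat => /orP[] /mapP[t + ->]; rewrite mem_iota => /andP[_ tm] /=;
  by rewrite divnMDl // divn_small // addn0.
Qed.

End FreshBlocks.

Section FreshBlockLaw.
Context {R : realType} {d : nat} {dO : measure_display} {O : measurableType dO}.
Context {P : probability O R} {alpha : R} {mu : probability (d.-tuple R) R}.
Context {xi : nat -> O -> bool} {U : nat -> O -> nat} {Y : nat -> O -> d.-tuple R}.
Hypothesis xi_law : forall n, (2 <= n)%N -> measurable_fun setT (xi n) /\
  P (xi n @^-1` [set true]) = alpha%:E.
Hypothesis Y_law : forall n, (1 <= n)%N -> measurable_fun setT (Y n) /\
  forall A, measurable A -> P (Y n @^-1` A) = mu A.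
Hypothesis indep : mutually_independent P (fun i : (nat + nat) + nat =>
  match i with
  | inl (inl n) => preimages (xi n.+2)
  | inl (inr n) => preimages (U n.+1)
  | inr n => preimages (Y n.+1)
  end).
Context {B : set (d.-tuple R)} {m : nat}.
Hypothesis mB : measurable B.

Lemma measurable_fresh_event i : measurable (fresh_event xi Y B i).
Proof.
rewrite -[X in measurable X]setTI; case: i => [[n|n]|n] /=.
- by have [mxi _] := xi_law n.+2 isT; exact: mxi.
- by rewrite setTI.
- by have [mY _] := Y_law n.+1 isT; exact: mY.
Qed.

Lemma measurable_fresh_block k : measurable (fresh_block xi Y B m k).
Proof.
by rewrite /fresh_block; apply: bigsetI_measurable => i _; exact: measurable_fresh_event.
Qed.

Lemma probability_xi_false n : (2 <= n)%N ->
  P (xi n @^-1` [set false]) = (1 - alpha)%:E.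
Proof.
move=> n2; have [mxi Pxi] := xi_law n n2.
have -> : xi n @^-1` [set false] = ~` (xi n @^-1` [set true]).
  by apply/seteqP; split => w /=; case: (xi n w).
by rewrite probability_setC ?Pxi // -[X in measurable X]setTI; exact: mxi.
Qed.

Lemma probability_fresh_block_indices k :
  (\prod_(i <- block_indices m k) P (fresh_event xi Y B i))%E =
  (((1 - alpha) * fine (mu B)) ^+ m)%:E.
Proof.
have muB : mu B = (fine (mu B))%:E by rewrite fineK ?fin_num_measure.
rewrite big_cat !big_map /=.
under eq_bigr => t _ do rewrite probability_xi_false //.
under [X in (_ * X)%E]eq_bigr => t _ do
  rewrite (Y_law (k * m + t).+2 isT).2 // muB.
by rewrite !prodEFin !big_const_seq !count_predT !iter_mulr_1 size_iota exprMn EFinM.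
Qed.

Lemma probability_fresh_blocks T : (0 < m)%N -> uniq T ->
  P (\big[setI/setT]_(k <- T) fresh_block xi Y B m k) =
  ((((1 - alpha) * fine (mu B)) ^+ m) ^+ size T)%:E.
Proof.
move=> m0 uT; rewrite (mutually_independent_blocks P _ _ _ _ indep); last 2 first.
- by case=> [[n|n]|n] /=; [exists [set false] | exists setT; rewrite ?preimage_setT | exists B].
- exact: uniq_fresh_blocks.
rewrite (eq_bigr (fun=> (((1 - alpha) * fine (mu B)) ^+ m)%:E)) => [|k _].
  by rewrite prodEFin big_const_seq count_predT iter_mulr_1.
exact: probability_fresh_block_indices.
Qed.

End FreshBlockLaw.

Theorem lemma3p13 (R : realType) (d : nat) (dO : measure_display)
  (O : measurableType dO) (P : probability O R)
  (alpha : R) (mu : probability (d.-tuple R) R)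
  (xi : nat -> O -> bool) (U : nat -> O -> nat) (Y : nat -> O -> d.-tuple R) :
  0 <= alpha -> alpha < 1 ->
  (* mu <> dirac at the origin *)
  (exists A : set (d.-tuple R), measurable A /\
     mu A <> \d_(nseq_tuple d (0 : R)) A) ->
  (* xi_n ~ Bernoulli(alpha), n >= 2 *)
  (forall n, (2 <= n)%N -> measurable_fun setT (xi n) /\
     P (xi n @^-1` [set true]) = alpha%:E) ->
  (* U[n] uniform on {1,...,n}, n >= 1 *)
  (forall n, (1 <= n)%N -> measurable_fun setT (U n) /\
     forall k, (1 <= k <= n)%N -> P (U n @^-1` [set k]) = (n%:R^-1)%:E) ->
  (* Y_n ~ mu, n >= 1 *)
  (forall n, (1 <= n)%N -> measurable_fun setT (Y n) /\
     forall A, measurable A -> P (Y n @^-1` A) = mu A) ->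
  (* (xi_n)_{n>=2}, (U[n])_{n>=1}, (Y_n)_{n>=1} all mutually independent *)
  mutually_independent P (fun i : (nat + nat) + nat =>
     match i with
     | inl (inl n) => preimages (xi n.+2)
     | inl (inr n) => preimages (U n.+1)
     | inr n => preimages (Y n.+1)
     end) ->
  forall r : R, 0 < r ->
  (\int[P]_w srrw_exit_time xi U Y r w < +oo)%E.
Proof.
move=> _ alpha_lt1 mu_not_dirac xi_law _ Y_law indep r r_gt0.
have [i [s [e [e_gt0 [s1 muB_gt0]]]]] := exists_coord_halfspace_gt0 mu mu_not_dirac.
set B := [set y | e < s * tnth y i] in muB_gt0.
pose m := (Num.truncn (2 * r / e)).+1.
have rme : 2 * r < m%:R * e by rewrite -ltr_pdivrMr // truncnS_gt.
have mB : measurable B := measurable_coord_halfspace i e s.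
have q_gt0 : 0 < fine (mu B).
  by rewrite fine_gt0 // muB_gt0 -ge0_fin_numE ?measure_ge0 ?fin_num_measure.
apply: (first_success_integral_lt_pinfty P (fresh_block xi Y B m)
          (((1 - alpha) * fine (mu B)) ^+ m) _ _ _ m.+1).
- exact: (measurable_fresh_block xi_law Y_law mB).
- exact: (probability_fresh_blocks xi_law Y_law indep mB ^~ (ltn0Sn _)).
- by rewrite exprn_gt0 // mulr_gt0 // subr_gt0.
- by [].
- exact: srrw_exit_time_ge0.
- move=> k w Bk; have run := fresh_block_run xi Y B m Bk.
  apply: le_trans (srrw_exit_time_le_fresh_run xi U Y s1 rme run) _.
  by rewrite lee_fin ler_nat; lia.
Qed.
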